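(* For each of the three games with payoff matrices $$A_1=\begin{pmatrix}0&-3&3\\2&0&-2\\-1&1&0\end{pmatrix},\quad A_2=\begin{pmatrix}0&-2&3\\2&0&-1\\-3&1&0\end{pmatrix},\quad A_3=\begin{pmatrix}0&-1&3\\2&0&-3\\-2&1&0\end{pmatrix},$$ the IBR dynamics has a unique rest point in the interior of $\Delta$, and this rest point is repelling: the Jacobian of the dynamics restricted to $\Delta$ (in two affine coordinates) at this rest point has two eigenvalues with positive real parts. For $A_1$ the interior rest point is $(\tfrac13,\tfrac13,\tfrac13)$ and the eigenvalues are $\frac{1\pm 2i\sqrt{26}}{27}$.
   Context: Let $n\ge 2$ and consider a symmetric two-player game with strategy set $S=\{1,\dots,n\}$ and payoff matrix $A=(\pi_{ij})_{i,j\in S}$, where $\pi_{ij}\in\mathbb{R}$ is the payoff of a player using strategy $i$ against an opponent using strategy $j$. The state space is the simplex $\Delta=\{x\in\mathbb{R}^n: x_i\ge 0,\ \sum_i x_i=1\}$, where $x_i$ is the population share using strategy $i$. The imitate-the-better-realization (IBR) dynamics is the ODE on $\Delta$ $$\dot x_i = x_i\sum_{j=1}^n\sum_{k=1}^n\sum_{m=1}^n x_jx_kx_m\big(\mathbf 1\{\pi_{jk}<\pi_{im}\}-\mathbf 1\{\pi_{jk}>\pi_{im}\}\big),\quad i\in S.$$ Here $n=3$. *)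

From Stdlib Require Import Reals Lra.
Open Scope R_scope.

(* Strategies are indexed 0,1,2 (paper's 1,2,3).  A state is x : nat -> R,
   of which only x 0, x 1, x 2 matter. *)

Definition cmpR (a b : R) : R :=
  (if Rlt_dec a b then 1 else 0) - (if Rlt_dec b a then 1 else 0).

Definition IBR (A : nat -> nat -> R) (x : nat -> R) (i : nat) : R :=
  x i * sum_f_R0 (fun j => sum_f_R0 (fun k => sum_f_R0 (fun m =>
          x j * x k * x m * cmpR (A j k) (A i m)) 2) 2) 2.

Definition interior (x : nat -> R) : Prop :=
  0 < x 0%nat /\ 0 < x 1%nat /\ 0 < x 2%nat /\ x 0%nat + x 1%nat + x 2%nat = 1.

Definition rest_point (A : nat -> nat -> R) (x : nat -> R) : Prop :=
  forall i, (i < 3)%nat -> IBR A x i = 0.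

Definition chart (y1 y2 : R) : nat -> R :=
  fun i => match i with 0%nat => y1 | 1%nat => y2 | _ => 1 - y1 - y2 end.

(* J = [[J11 J12];[J21 J22]] is the Jacobian at p of the dynamics restricted
   to the simplex in the affine coordinates (x_1, x_2). *)
Definition is_jacobian (A : nat -> nat -> R) (p : nat -> R)
    (J11 J12 J21 J22 : R) : Prop :=
  derivable_pt_lim (fun t => IBR A (chart t (p 1%nat)) 0%nat) (p 0%nat) J11 /\
  derivable_pt_lim (fun t => IBR A (chart (p 0%nat) t) 0%nat) (p 1%nat) J12 /\
  derivable_pt_lim (fun t => IBR A (chart t (p 1%nat)) 1%nat) (p 0%nat) J21 /\
  derivable_pt_lim (fun t => IBR A (chart (p 0%nat) t) 1%nat) (p 1%nat) J22.

Definition Cplx := (R * R)%type.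
Definition Cmul (z w : Cplx) : Cplx :=
  (fst z * fst w - snd z * snd w, fst z * snd w + snd z * fst w).
Definition Csub (z w : Cplx) : Cplx := (fst z - fst w, snd z - snd w).
Definition Creal (a : R) : Cplx := (a, 0).

Definition is_eigenvalue2 (J11 J12 J21 J22 : R) (l : Cplx) : Prop :=
  Csub (Cmul (Csub (Creal J11) l) (Csub (Creal J22) l))
       (Creal (J12 * J21)) = (0, 0).

Definition Game1 (i j : nat) : R :=
  match i, j return R with
  | O, O => 0 | O, S O => -3 | O, S (S O) => 3
  | S O, O => 2 | S O, S O => 0  | S O, S (S O) => -2
  | S (S O), O => -1 | S (S O), S O => 1 | S (S O), S (S O) => 0
  | _,_ => 0 end.
Definition Game2 (i j : nat) : R :=
  match i, j return R with
  | O, O => 0 | O, S O => -2 | O, S (S O) => 3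
  | S O, O => 2 | S O, S O => 0  | S O, S (S O) => -1
  | S (S O), O => -3 | S (S O), S O => 1 | S (S O), S (S O) => 0
  | _,_ => 0 end.
Definition Game3 (i j : nat) : R :=
  match i, j return R with
  | O, O => 0 | O, S O => -1 | O, S (S O) => 3
  | S O, O => 2 | S O, S O => 0  | S O, S (S O) => -3
  | S (S O), O => -2 | S (S O), S O => 1 | S (S O), S (S O) => 0
  | _,_ => 0 end.

Definition unique_repelling_interior_rest (A : nat -> nat -> R) (p : nat -> R) : Prop :=
  interior p /\ rest_point A p /\
  (forall y, interior y -> rest_point A y -> forall i, (i < 3)%nat -> y i = p i) /\
  exists J11 J12 J21 J22, is_jacobian A p J11 J12 J21 J22 /\
    forall l, is_eigenvalue2 J11 J12 J21 J22 l -> 0 < fst l.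

From Pilot Require Import Defs.
From Stdlib Require Import Reals Lra Psatz QArith Qreals.
From Coquelicot Require Import Coquelicot.
Open Scope R_scope.

(** For a concrete game all comparison indicators can be evaluated, so each
    component of the field becomes [x_i * F_i x] for an explicit cubic
    growth rate [F_i].  Game 1 is done by hand: [F_0] and [F_1] factor through
    [x_2 - x_1] and [x_0 - x_1] with cofactors positive on the simplex.
    For games 2 and 3 the rest point is irrational.  Eliminating [w] between
    two growth rates, written in the chart [(a, w, 1 - a - w)], yields a
    polynomial [P a] of degree 9 and a relation [r1 a * w + r0 a = 0]
    (cofactor identities checked by [ring]).  The generic theorem
    [unique_repelling_of_certificate] turns such an elimination into
    existence, uniqueness and repulsion, given four numerical facts: [P'] has
    no zero on [0, 1], [P] changes sign on a small interval, the linear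
    relation brackets [w] in a small interval, and trace and determinant of
    the Jacobian are positive on the resulting box.  These facts are proved
    by a small verified interval arithmetic over the rationals, executed by
    [vm_compute]. *)

Lemma cmpR_lt a b : a < b -> cmpR a b = 1.
Proof. intro H; unfold cmpR; destruct (Rlt_dec a b); destruct (Rlt_dec b a); lra. Qed.

Lemma cmpR_gt a b : b < a -> cmpR a b = -1.
Proof. intro H; unfold cmpR; destruct (Rlt_dec a b); destruct (Rlt_dec b a); lra. Qed.

Lemma cmpR_eq a b : a = b -> cmpR a b = 0.
Proof. intro H; unfold cmpR; destruct (Rlt_dec a b); destruct (Rlt_dec b a); lra. Qed.

(* For a concrete payoff matrix every comparison [cmpR pi_jk pi_im] is decided
   by [lra], which turns the IBR field into an explicit polynomial. *)
Ltac eval_cmpR :=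
  repeat match goal with
  | |- context [cmpR ?a ?b] =>
      first [ rewrite (cmpR_lt a b) by lra
            | rewrite (cmpR_gt a b) by lra
            | rewrite (cmpR_eq a b) by lra ]
  end.

(** States are functions [nat -> R]; only the values at 0, 1, 2 matter, so a
   rest point can be moved to the chart image of its first two shares. *)

Lemma IBR_ext A x y i : (forall j, (j <= 2)%nat -> x j = y j) -> x i = y i ->
  IBR A x i = IBR A y i.
Proof.
  intros Hxy Hi; unfold IBR; rewrite Hi; f_equal.
  apply sum_eq; intros j Hj; apply sum_eq; intros k Hk; apply sum_eq; intros m Hm.
  now rewrite !Hxy.
Qed.

Lemma rest_point_ext A x y : (forall j, (j <= 2)%nat -> x j = y j) ->
  rest_point A x -> rest_point A y.
Proof.
  intros Hxy Hx i Hi; rewrite <- (IBR_ext A x y i Hxy); [apply Hx, Hi | apply Hxy; lia].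
Qed.

Lemma interior_chart x : Defs.interior x ->
  forall j, (j <= 2)%nat -> x j = chart (x 0%nat) (x 1%nat) j.
Proof.
  intros (_ & _ & _ & Hs) j Hj; destruct j as [|[|[|j]]]; simpl; lra || lia.
Qed.

(** * Certified interval arithmetic for bivariate polynomials

   Polynomial expressions in two real variables with rational constants are
   reified into [poly2]; [ieval2] evaluates them in interval arithmetic over
   the rationals, and [positive_on] bisects the first variable until every
   sub-box gets a positive lower bound. *)

Inductive poly2 : Type :=
  | Cst (z : Z)
  | Rat (z : Z) (d : positive)
  | VarX
  | VarY
  | Add (p q : poly2)
  | Sub (p q : poly2)
  | Mul (p q : poly2)
  | Opp (p : poly2)
  | Pow (p : poly2) (n : nat).

Fixpoint eval2 (x y : R) (p : poly2) : R :=
  match p with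
  | Cst z => IZR z
  | Rat z d => IZR z / IZR (Zpos d)
  | VarX => x
  | VarY => y
  | Add p q => eval2 x y p + eval2 x y q
  | Sub p q => eval2 x y p - eval2 x y q
  | Mul p q => eval2 x y p * eval2 x y q
  | Opp p => - eval2 x y p
  | Pow p n => eval2 x y p ^ n
  end.

Definition interval : Type := (Q * Q)%type.

Definition in_interval (I : interval) (r : R) : Prop :=
  Q2R (fst I) <= r <= Q2R (snd I).

Definition qmin (a b : Q) : Q := if Qle_bool a b then a else b.
Definition qmax (a b : Q) : Q := if Qle_bool a b then b else a.

Lemma Q2R_qmin a b : Q2R (qmin a b) = Rmin (Q2R a) (Q2R b).
Proof.
  unfold qmin; destruct (Qle_bool a b) eqn:E.
  - apply Qle_bool_iff, Qle_Rle in E; now rewrite Rmin_left.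
  - assert (H : (b < a)%Q)
      by (apply Qnot_le_lt; intro H; apply Qle_bool_iff in H; congruence).
    apply Qlt_Rlt in H; rewrite Rmin_right; lra.
Qed.

Lemma Q2R_qmax a b : Q2R (qmax a b) = Rmax (Q2R a) (Q2R b).
Proof.
  unfold qmax; destruct (Qle_bool a b) eqn:E.
  - apply Qle_bool_iff, Qle_Rle in E; now rewrite Rmax_right.
  - assert (H : (b < a)%Q)
      by (apply Qnot_le_lt; intro H; apply Qle_bool_iff in H; congruence).
    apply Qlt_Rlt in H; rewrite Rmax_left; lra.
Qed.

Lemma Q2R_Qred q : Q2R (Qred q) = Q2R q.
Proof. apply Qeq_eqR, Qred_correct. Qed.

(* Interval operations; results are normalised by [Qred] to keep numbers small. *)
Definition iadd (I J : interval) : interval :=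
  (Qred (fst I + fst J), Qred (snd I + snd J)).
Definition isub (I J : interval) : interval :=
  (Qred (fst I - snd J), Qred (snd I - fst J)).
Definition iopp (I : interval) : interval := (- snd I, - fst I)%Q.
Definition imul (I J : interval) : interval :=
  let '(a, b) := I in let '(c, d) := J in
  (Qred (qmin (qmin (a * c) (a * d)) (qmin (b * c) (b * d))),
   Qred (qmax (qmax (a * c) (a * d)) (qmax (b * c) (b * d)))).

Fixpoint ipow (I : interval) (n : nat) : interval :=
  match n with O => (1, 1)%Q | S n => imul I (ipow I n) end.

Fixpoint ieval2 (Ix Iy : interval) (p : poly2) : interval :=
  match p with
  | Cst z => (inject_Z z, inject_Z z)
  | Rat z d => (z # d, z # d)%Q
  | VarX => Ix
  | VarY => Iy
  | Add p q => iadd (ieval2 Ix Iy p) (ieval2 Ix Iy q)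
  | Sub p q => isub (ieval2 Ix Iy p) (ieval2 Ix Iy q)
  | Mul p q => imul (ieval2 Ix Iy p) (ieval2 Ix Iy q)
  | Opp p => iopp (ieval2 Ix Iy p)
  | Pow p n => ipow (ieval2 Ix Iy p) n
  end.

Lemma iadd_sound I J r s :
  in_interval I r -> in_interval J s -> in_interval (iadd I J) (r + s).
Proof. unfold in_interval, iadd; cbn [fst snd]; rewrite !Q2R_Qred, !Q2R_plus; lra. Qed.

Lemma isub_sound I J r s :
  in_interval I r -> in_interval J s -> in_interval (isub I J) (r - s).
Proof. unfold in_interval, isub; cbn [fst snd]; rewrite !Q2R_Qred, !Q2R_minus; lra. Qed.

Lemma iopp_sound I r : in_interval I r -> in_interval (iopp I) (- r).
Proof. unfold in_interval, iopp; cbn [fst snd]; rewrite !Q2R_opp; lra. Qed.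

(* Since [r * s] is affine in each factor, it lies between the extreme
   products of the endpoints. *)
Lemma mul_between a b c d r s : a <= r <= b -> c <= s <= d ->
  Rmin (Rmin (a * c) (a * d)) (Rmin (b * c) (b * d)) <= r * s <=
  Rmax (Rmax (a * c) (a * d)) (Rmax (b * c) (b * d)).
Proof.
  intros Hr Hs.
  assert (Hrs : Rmin (r * c) (r * d) <= r * s <= Rmax (r * c) (r * d)).
  { destruct (Rle_dec 0 r);
      [rewrite Rmin_left, Rmax_right by nra | rewrite Rmin_right, Rmax_left by nra]; nra. }
  assert (Hc : Rmin (a * c) (b * c) <= r * c <= Rmax (a * c) (b * c)).
  { destruct (Rle_dec 0 c);
      [rewrite Rmin_left, Rmax_right by nra | rewrite Rmin_right, Rmax_left by nra]; nra. }
  assert (Hd : Rmin (a * d) (b * d) <= r * d <= Rmax (a * d) (b * d)).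
  { destruct (Rle_dec 0 d);
      [rewrite Rmin_left, Rmax_right by nra | rewrite Rmin_right, Rmax_left by nra]; nra. }
  revert Hrs Hc Hd; unfold Rmin, Rmax; repeat destruct Rle_dec; lra.
Qed.

Lemma imul_sound I J r s :
  in_interval I r -> in_interval J s -> in_interval (imul I J) (r * s).
Proof.
  destruct I as [a b], J as [c d]; unfold in_interval, imul; cbn [fst snd].
  rewrite !Q2R_Qred, !Q2R_qmin, !Q2R_qmax, !Q2R_mult; apply mul_between.
Qed.

Lemma ipow_sound I r n : in_interval I r -> in_interval (ipow I n) (r ^ n).
Proof.
  intro H; induction n as [|n IH]; simpl.
  - unfold in_interval, Q2R; cbn [fst snd Qnum Qden]; lra.
  - now apply imul_sound.
Qed.

Lemma ieval2_sound Ix Iy x y p : in_interval Ix x -> in_interval Iy y ->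
  in_interval (ieval2 Ix Iy p) (eval2 x y p).
Proof.
  intros Hx Hy; induction p; simpl.
  - unfold in_interval, Q2R, inject_Z; cbn [fst snd Qnum Qden]; lra.
  - unfold in_interval, Q2R, Rdiv; cbn [fst snd Qnum Qden]; lra.
  - exact Hx.
  - exact Hy.
  - now apply iadd_sound.
  - now apply isub_sound.
  - now apply imul_sound.
  - now apply iopp_sound.
  - now apply ipow_sound.
Qed.

Definition positive_interval (I : interval) : bool := negb (Qle_bool (fst I) 0).

Lemma positive_interval_sound I r :
  positive_interval I = true -> in_interval I r -> 0 < r.
Proof.
  unfold positive_interval, in_interval; intros H [Hl _].
  apply negb_true_iff in H.
  assert (Hq : (0 < fst I)%Q)
    by (apply Qnot_le_lt; intro E; apply Qle_bool_iff in E; congruence).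
  apply Qlt_Rlt in Hq; rewrite RMicromega.Q2R_0 in Hq; lra.
Qed.

(* Kept opaque to [simpl] so that the bisection point stays a single atom
   in the soundness proof. *)
Definition midpoint (I : interval) : Q := Qred ((fst I + snd I) / 2).
Arguments midpoint : simpl never.

Fixpoint positive_on (n : nat) (Ix Iy : interval) (p : poly2) : bool :=
  positive_interval (ieval2 Ix Iy p) ||
  match n with
  | O => false
  | S n => positive_on n (fst Ix, midpoint Ix) Iy p &&
           positive_on n (midpoint Ix, snd Ix) Iy p
  end.

Lemma positive_on_sound n Ix Iy p : positive_on n Ix Iy p = true ->
  forall x y, in_interval Ix x -> in_interval Iy y -> 0 < eval2 x y p.
Proof.
  revert Ix; induction n as [|n IH]; intros [l u] H x y Hx Hy; simpl in H.
  - rewrite orb_false_r in H.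
    exact (positive_interval_sound _ _ H (ieval2_sound _ _ _ _ _ Hx Hy)).
  - apply orb_true_iff in H as [H|H].
    + exact (positive_interval_sound _ _ H (ieval2_sound _ _ _ _ _ Hx Hy)).
    + apply andb_true_iff in H as [H1 H2].
      destruct Hx as [Hl Hu]; cbn [fst snd] in Hl, Hu.
      destruct (Rle_dec x (Q2R (midpoint (l, u)))) as [Hm|Hm].
      * apply (IH _ H1); [split|]; assumption.
      * apply (IH _ H2); [split; cbn [fst snd]; lra|]; assumption.
Qed.

Ltac reify_poly2 x y t :=
  lazymatch t with
  | x => constr:(VarX)
  | y => constr:(VarY)
  | ?a + ?b => let a := reify_poly2 x y a in let b := reify_poly2 x y b in constr:(Add a b)
  | ?a - ?b => let a := reify_poly2 x y a in let b := reify_poly2 x y b in constr:(Sub a b)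
  | ?a * ?b => let a := reify_poly2 x y a in let b := reify_poly2 x y b in constr:(Mul a b)
  | - ?a => let a := reify_poly2 x y a in constr:(Opp a)
  | ?a ^ ?n => let a := reify_poly2 x y a in constr:(Pow a n)
  | IZR ?z / IZR (Zpos ?d) => constr:(Rat z d)
  | IZR ?z => constr:(Cst z)
  end.

(* Proves [0 < t] for a polynomial [t] in [x, y] from bounds on [x] and [y]
   in the context matching the rational boxes [Ix] and [Iy]. *)
Ltac interval_positive x y Ix Iy depth :=
  lazymatch goal with
  | |- 0 < ?t =>
    let p := reify_poly2 x y t in
    change (0 < eval2 x y p);
    apply (positive_on_sound depth Ix Iy p);
      [vm_compute; reflexivity | unfold in_interval, Q2R; cbn [fst snd Qnum Qden]; lra ..]
  end.

(* One-variable case: [t] does not mention the second variable. *)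
Ltac interval_positive1 x Ix depth := interval_positive x x Ix Ix depth.

Lemma eigenvalues_right_half_plane J11 J12 J21 J22 :
  0 < J11 + J22 -> 0 < J11 * J22 - J12 * J21 ->
  forall l, is_eigenvalue2 J11 J12 J21 J22 l -> 0 < fst l.
Proof.
  intros Htr Hdet [a b] H; unfold is_eigenvalue2, Csub, Cmul, Creal in H; simpl in *.
  injection H as Hre Him.
  assert (Hb : b * (J11 + J22 - 2 * a) = 0) by nra.
  destruct (Rmult_integral _ _ Hb) as [-> | Ha]; nra.
Qed.

Lemma zero_unique_of_deriv_nonzero (P dP : R -> R) :
  (forall c, derivable_pt_lim P c (dP c)) ->
  (forall c, 0 <= c <= 1 -> dP c <> 0) ->
  forall a b, 0 <= a <= 1 -> 0 <= b <= 1 -> P a = 0 -> P b = 0 -> a = b.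
Proof.
  intros HP HdP.
  assert (Hlt : forall a b, 0 <= a -> b <= 1 -> a < b -> P a = 0 -> P b = 0 -> False).
  { intros a b Ha Hb Hab Pa Pb.
    destruct (MVT_cor2 P dP a b Hab (fun c _ => HP c)) as [c [Hc Hcab]].
    rewrite Pa, Pb in Hc.
    assert (Hprod : dP c * (b - a) = 0) by lra.
    destruct (Rmult_integral _ _ Hprod); [apply (HdP c); lra | lra]. }
  intros a b Ha Hb Pa Pb; destruct (Rtotal_order a b) as [H|[H|H]];
    [exfalso; apply (Hlt a b) | exact H | exfalso; apply (Hlt b a)]; lra.
Qed.

Lemma affine_zero_between r1 r0 wl wu : wl <= wu ->
  (r1 * wl + r0) * (r1 * wu + r0) < 0 ->
  r1 <> 0 /\ forall w, r1 * w + r0 = 0 -> wl < w < wu.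
Proof.
  intros Hw Hsign; split.
  - intros ->; nra.
  - intros w Hroot.
    replace r0 with (- (r1 * w)) in Hsign by lra.
    replace ((r1 * wl + - (r1 * w)) * (r1 * wu + - (r1 * w)))
      with (r1 * r1 * ((wl - w) * (wu - w))) in Hsign by ring.
    assert (0 <= r1 * r1) by nra.
    assert ((wl - w) * (wu - w) < 0) by nra.
    nra.
Qed.

(** * From an elimination certificate to a unique repelling rest point *)

Section EliminationCertificate.

Variable A : nat -> nat -> R.
Variables f g : R -> R -> R.
Hypothesis rest_point_chart : forall a w, 0 < a -> 0 < w -> 0 < 1 - a - w ->
  (rest_point A (chart a w) <-> f a w = 0 /\ g a w = 0).

Variables P dP r1 r0 : R -> R.
Hypothesis eliminate : forall a w, 0 < a -> f a w = 0 -> g a w = 0 ->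
  P a = 0 /\ r1 a * w + r0 a = 0.
Hypothesis back_substitute : forall a w, 0 < a -> r1 a <> 0 -> P a = 0 ->
  r1 a * w + r0 a = 0 -> f a w = 0 /\ g a w = 0.
Hypothesis P_derivative : forall a, derivable_pt_lim P a (dP a).
Hypothesis dP_nonzero : forall a, 0 <= a <= 1 -> dP a <> 0.

Variables l u wl wu : R.
Hypothesis box_in_simplex : 0 < l <= u /\ 0 < wl <= wu /\ u + wu <= 1.
Hypothesis P_sign_change : P l * P u <= 0.
Hypothesis linear_sign_change : forall a, l <= a <= u ->
  (r1 a * wl + r0 a) * (r1 a * wu + r0 a) < 0.

Variables J11 J12 J21 J22 : R -> R -> R.
Hypothesis jacobian : forall a w,
  is_jacobian A (chart a w) (J11 a w) (J12 a w) (J21 a w) (J22 a w).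
Hypothesis trace_positive : forall a w, l <= a <= u -> wl <= w <= wu ->
  0 < J11 a w + J22 a w.
Hypothesis det_positive : forall a w, l <= a <= u -> wl <= w <= wu ->
  0 < J11 a w * J22 a w - J12 a w * J21 a w.

Theorem unique_repelling_of_certificate :
  exists p, unique_repelling_interior_rest A p.
Proof.
  destruct box_in_simplex as ([Hl Hlu] & [Hwl Hwlu] & Hsum).
  assert (HPc : continuity P)
    by (intro c; apply derivable_continuous_pt; exists (dP c); apply P_derivative).
  destruct (IVT_cor P l u HPc Hlu P_sign_change) as (z & Hz & Pz).
  destruct (affine_zero_between (r1 z) (r0 z) wl wu Hwlu (linear_sign_change z Hz))
    as [Hr1 Hbetween].
  set (w := - r0 z / r1 z).
  assert (Hlin : r1 z * w + r0 z = 0) by (unfold w; field; exact Hr1).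
  specialize (Hbetween w Hlin).
  assert (Hint : Defs.interior (chart z w)) by (unfold Defs.interior, chart; lra).
  assert (Hrest : rest_point A (chart z w)).
  { apply rest_point_chart; [lra | lra | lra |].
    apply back_substitute; [lra | exact Hr1 | exact Pz | exact Hlin]. }
  exists (chart z w); split; [exact Hint | split; [exact Hrest | split]].
  - (* uniqueness: an interior rest point solves the same eliminated system *)
    intros y Hy Hyrest.
    pose proof (interior_chart y Hy) as Hyc.
    destruct Hy as (Hy0 & Hy1 & Hy2 & Hys).
    pose proof (rest_point_ext A y _ Hyc Hyrest) as Hrest_y.
    apply rest_point_chart in Hrest_y as [Hf Hg]; [|simpl in *; lra ..].
    destruct (eliminate _ _ Hy0 Hf Hg) as [Py Hliny].
    assert (Hyz : y 0%nat = z)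
      by (apply (zero_unique_of_deriv_nonzero P dP P_derivative dP_nonzero); lra).
    rewrite Hyz in Hliny.
    assert (Hyw : y 1%nat = w) by (apply (Rmult_eq_reg_l (r1 z)); [lra | exact Hr1]).
    intros i Hi; rewrite (Hyc i ltac:(lia)); cbv beta iota delta [chart].
    destruct i as [|[|[|i]]]; [exact Hyz | exact Hyw | rewrite Hyz, Hyw; reflexivity | lia].
  -
    exists (J11 z w), (J12 z w), (J21 z w), (J22 z w); split; [apply jacobian|].
    apply eigenvalues_right_half_plane;
      [apply trace_positive | apply det_positive]; lra.
Qed.

End EliminationCertificate.

Section GrowthRates.

Variable A : nat -> nat -> R.
Variables F0 F1 F2 : R -> R -> R -> R.
Hypothesis factor0 : forall x, IBR A x 0%nat = x 0%nat * F0 (x 0%nat) (x 1%nat) (x 2%nat).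
Hypothesis factor1 : forall x, IBR A x 1%nat = x 1%nat * F1 (x 0%nat) (x 1%nat) (x 2%nat).
Hypothesis factor2 : forall x, IBR A x 2%nat = x 2%nat * F2 (x 0%nat) (x 1%nat) (x 2%nat).

Lemma rest_point_chart_iff a w : 0 < a -> 0 < w -> 0 < 1 - a - w ->
  (rest_point A (chart a w) <->
   F0 a w (1 - a - w) = 0 /\ F1 a w (1 - a - w) = 0 /\ F2 a w (1 - a - w) = 0).
Proof.
  intros Ha Hw Hc; split.
  - intro Hrest.
    pose proof (Hrest 0%nat ltac:(lia)) as H0; rewrite factor0 in H0.
    pose proof (Hrest 1%nat ltac:(lia)) as H1; rewrite factor1 in H1.
    pose proof (Hrest 2%nat ltac:(lia)) as H2; rewrite factor2 in H2.
    cbv beta iota delta [chart] in H0, H1, H2.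
    repeat split; [destruct (Rmult_integral _ _ H0) | destruct (Rmult_integral _ _ H1)
      | destruct (Rmult_integral _ _ H2)]; lra.
  - intros (H0 & H1 & H2) i Hi; destruct i as [|[|[|i]]];
      [rewrite factor0 | rewrite factor1 | rewrite factor2 | lia];
      cbv beta iota delta [chart]; [rewrite H0 | rewrite H1 | rewrite H2]; ring.
Qed.

End GrowthRates.

(* Partial derivatives of a component [x_i * F_i x] along the chart, given
   the factorisation lemmas [H0], [H1] of the components 0 and 1; the tactic
   [unfold_growth] exposes the polynomials [F_i] to [auto_derive]. *)
Ltac jacobian_entry H0 H1 unfold_growth :=
  apply is_derive_Reals;
  eapply is_derive_ext; [intro; symmetry; first [apply H0 | apply H1] |];
  cbv beta iota delta [chart]; unfold_growth; auto_derive; try exact I; field.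

(** * Game 1: the rest point is the barycentre *)

Definition growth1_0 (x0 x1 x2 : R) : R :=
  x2^3 + x1 * x2^2 - x1^2 * x2 - x1^3 + x0 * x2^2 - x0 * x1^2 + x0^2 * x2 - x0^2 * x1.
Definition growth1_1 (x0 x1 x2 : R) : R :=
  - x2^3 - x1 * x2^2 - x1^2 * x2 - x0 * x2^2 + 2 * x0 * x1 * x2 + x0 * x1^2
  - x0^2 * x2 + x0^2 * x1 + x0^3.
Definition growth1_2 (x0 x1 x2 : R) : R :=
  x1 * x2^2 + x1^2 * x2 + x1^3 - x0 * x2^2 - x0 * x1^2 - x0^2 * x2 + x0^2 * x1 - x0^3.

Lemma IBR_game1_0 x : IBR Game1 x 0%nat = x 0%nat * growth1_0 (x 0%nat) (x 1%nat) (x 2%nat).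
Proof. unfold IBR, growth1_0; simpl sum_f_R0; unfold Game1; eval_cmpR; ring. Qed.
Lemma IBR_game1_1 x : IBR Game1 x 1%nat = x 1%nat * growth1_1 (x 0%nat) (x 1%nat) (x 2%nat).
Proof. unfold IBR, growth1_1; simpl sum_f_R0; unfold Game1; eval_cmpR; ring. Qed.
Lemma IBR_game1_2 x : IBR Game1 x 2%nat = x 2%nat * growth1_2 (x 0%nat) (x 1%nat) (x 2%nat).
Proof. unfold IBR, growth1_2; simpl sum_f_R0; unfold Game1; eval_cmpR; ring. Qed.

Definition barycentre : nat -> R := fun _ => 1/3.

Lemma barycentre_interior : Defs.interior barycentre.
Proof. unfold Defs.interior, barycentre; lra. Qed.

Lemma barycentre_rest_point : rest_point Game1 barycentre.
Proof.
  intros i Hi; destruct i as [|[|[|i]]];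
    [rewrite IBR_game1_0; unfold growth1_0 | rewrite IBR_game1_1; unfold growth1_1
    | rewrite IBR_game1_2; unfold growth1_2 | lia];
    unfold barycentre; field.
Qed.

(* growth1_0 factors through [x2 - x1] and growth1_1 through [x0 - x1], with
   cofactors positive on the open simplex. *)
Lemma game1_rest_point_unique y : Defs.interior y -> rest_point Game1 y ->
  forall i, (i < 3)%nat -> y i = 1/3.
Proof.
  intros (Hy0 & Hy1 & Hy2 & Hys) Hrest.
  pose proof (Hrest 0%nat ltac:(lia)) as H0; rewrite IBR_game1_0 in H0.
  pose proof (Hrest 1%nat ltac:(lia)) as H1; rewrite IBR_game1_1 in H1.
  set (a := y 0%nat) in *; set (b := y 1%nat) in *; set (c := y 2%nat) in *.
  assert (Hcb : c = b).
  { assert (E : a * ((c - b) * (c^2 + 2*b*c + b^2 + a*b + a*c + a^2)) = 0)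
      by (rewrite <- H0; unfold growth1_0; ring).
    assert (0 < c^2 + 2*b*c + b^2 + a*b + a*c + a^2) by nra.
    destruct (Rmult_integral _ _ E) as [|E']; [lra|].
    destruct (Rmult_integral _ _ E'); lra. }
  assert (Hab : a = b).
  { assert (E : b * ((a - b) * (a^2 + a*b + 3*b^2)) = 0)
      by (rewrite <- H1, Hcb; unfold growth1_1; ring).
    assert (0 < a^2 + a*b + 3*b^2) by nra.
    destruct (Rmult_integral _ _ E) as [|E']; [lra|].
    destruct (Rmult_integral _ _ E'); lra. }
  intros i Hi; destruct i as [|[|[|i]]]; [change (a = 1/3) | change (b = 1/3)
    | change (c = 1/3) | lia]; lra.
Qed.

Lemma game1_jacobian :
  is_jacobian Game1 barycentre (-7/27) (-14/27) (4/9) (1/3).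
Proof.
  unfold is_jacobian, barycentre; repeat split;
    jacobian_entry IBR_game1_0 IBR_game1_1 ltac:(unfold growth1_0, growth1_1).
Qed.

(* The characteristic polynomial at the barycentre is
   [lambda^2 - (2/27) lambda + 35/243], with roots (1 +- 2 i sqrt 26) / 27. *)
Lemma game1_eigenvalues l : is_eigenvalue2 (-7/27) (-14/27) (4/9) (1/3) l <->
  (l = (1/27, 2 * sqrt 26 / 27) \/ l = (1/27, - (2 * sqrt 26 / 27))).
Proof.
  assert (Hs : sqrt 26 * sqrt 26 = 26) by (apply sqrt_sqrt; lra).
  destruct l as [a b]; unfold is_eigenvalue2, Csub, Cmul, Creal; simpl; split.
  - intro H; injection H as Hre Him.
    assert (Hb : b * (2/27 - 2 * a) = 0) by lra.
    destruct (Rmult_integral _ _ Hb) as [-> | Ha]; [exfalso; nra|].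
    assert (Ha' : a = 1/27) by lra; subst a.
    assert (Hp : (b - 2 * sqrt 26 / 27) * (b + 2 * sqrt 26 / 27) = 0) by nra.
    destruct (Rmult_integral _ _ Hp); [left | right]; f_equal; lra.
  - intros [H|H]; injection H as -> ->; f_equal; nra.
Qed.

Lemma game1_unique_repelling : unique_repelling_interior_rest Game1 barycentre.
Proof.
  split; [exact barycentre_interior | split; [exact barycentre_rest_point | split]].
  - exact game1_rest_point_unique.
  - exists (-7/27), (-14/27), (4/9), (1/3); split; [exact game1_jacobian|].
    apply eigenvalues_right_half_plane; lra.
Qed.

(** * Game 2 *)

Definition growth2_0 (x0 x1 x2 : R) : R :=
  x2^3 + x1 * x2^2 - x1^2 * x2 - x1^3 + x0 * x2^2 + 2 * x0 * x1 * x2 - x0 * x1^2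
  + x0^2 * x2 - x0^2 * x1.
Definition growth2_1 (x0 x1 x2 : R) : R :=
  - x2^3 - x1 * x2^2 - x1^2 * x2 + x0 * x2^2 + 2 * x0 * x1 * x2 + x0 * x1^2
  - x0^2 * x2 + x0^2 * x1 + x0^3.
Definition growth2_2 (x0 x1 x2 : R) : R :=
  x1 * x2^2 + x1^2 * x2 + x1^3 - x0 * x2^2 - 2 * x0 * x1 * x2 - x0 * x1^2
  - x0^2 * x2 - x0^2 * x1 - x0^3.

Lemma IBR_game2_0 x : IBR Game2 x 0%nat = x 0%nat * growth2_0 (x 0%nat) (x 1%nat) (x 2%nat).
Proof. unfold IBR, growth2_0; simpl sum_f_R0; unfold Game2; eval_cmpR; ring. Qed.
Lemma IBR_game2_1 x : IBR Game2 x 1%nat = x 1%nat * growth2_1 (x 0%nat) (x 1%nat) (x 2%nat).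
Proof. unfold IBR, growth2_1; simpl sum_f_R0; unfold Game2; eval_cmpR; ring. Qed.
Lemma IBR_game2_2 x : IBR Game2 x 2%nat = x 2%nat * growth2_2 (x 0%nat) (x 1%nat) (x 2%nat).
Proof. unfold IBR, growth2_2; simpl sum_f_R0; unfold Game2; eval_cmpR; ring. Qed.

Definition f2 (a w : R) : R := growth2_0 a w (1 - a - w).
Definition g2 (a w : R) : R := growth2_2 a w (1 - a - w).

Lemma game2_rest_point_chart a w : 0 < a -> 0 < w -> 0 < 1 - a - w ->
  (rest_point Game2 (chart a w) <-> f2 a w = 0 /\ g2 a w = 0).
Proof.
  intros Ha Hw Hc.
  rewrite (rest_point_chart_iff Game2 growth2_0 growth2_1 growth2_2
             IBR_game2_0 IBR_game2_1 IBR_game2_2 a w Ha Hw Hc).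
  unfold f2, g2; split; [tauto|]; intros [H0 H2]; repeat split; try assumption.
  assert (Hbal : a * growth2_0 a w (1 - a - w) + w * growth2_1 a w (1 - a - w)
                 + (1 - a - w) * growth2_2 a w (1 - a - w) = 0)
    by (unfold growth2_0, growth2_1, growth2_2; ring).
  (* the field is tangent to the simplex, so the third growth rate vanishes too *)
  rewrite H0, H2 in Hbal.
  destruct (Rmult_integral w (growth2_1 a w (1 - a - w))); lra.
Qed.

(* Elimination of [w]: the resultant [P2] and the linear equation
   [r1_2 a * w + r0_2 a = 0] generate the same ideal as [f2], [g2] (for a <> 0);
   the cofactors below are checked by [ring]. *)
Definition P2 (a : R) : R :=
  12 + a * (-104 + a * (376 + a * (-948 + a * (1712 + a * (-2336 + a * (2308
  + a * (-1640 + a * (744 + a * -188)))))))).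
Definition dP2 (a : R) : R :=
  -104 + a * (752 + a * (-2844 + a * (6848 + a * (-11680 + a * (13848
  + a * (-11480 + a * (5952 + a * -1692))))))).
Definition r1_2 (a : R) : R := 4 + a * (-10 + a * (20 + a * (-20 + a * 10))).
Definition r0_2 (a : R) : R := -2 + a * (6 + a * (-10 + a * (6 + a * (-2 + a * -2)))).

Lemma game2_linear_in_ideal a w : r1_2 a * w + r0_2 a =
  (-2 + 2 * a + 2 * a * w - 2 * a^2) * f2 a w + 4 * a^2 * g2 a w.
Proof. unfold r1_2, r0_2, f2, g2, growth2_0, growth2_2; ring. Qed.

Lemma game2_f_from_P a w : r1_2 a ^ 2 * f2 a w = a^2 * P2 a +
  (-8 + 32 * a - 8 * a * w - 84 * a^2 + 20 * a^2 * w + 140 * a^3 - 40 * a^3 * w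
   - 168 * a^4 + 40 * a^4 * w + 116 * a^5 - 20 * a^5 * w - 44 * a^6)
  * (r1_2 a * w + r0_2 a).
Proof. unfold P2, r1_2, r0_2, f2, growth2_0; ring. Qed.

Lemma game2_g_from_f a w : 4 * a^2 * g2 a w =
  (2 - 2 * a - 2 * a * w + 2 * a^2) * f2 a w + (r1_2 a * w + r0_2 a).
Proof. unfold r1_2, r0_2, f2, g2, growth2_0, growth2_2; ring. Qed.

Lemma game2_eliminate a w : 0 < a -> f2 a w = 0 -> g2 a w = 0 ->
  P2 a = 0 /\ r1_2 a * w + r0_2 a = 0.
Proof.
  intros Ha Hf Hg.
  assert (Hlin : r1_2 a * w + r0_2 a = 0)
    by (rewrite game2_linear_in_ideal, Hf, Hg; ring).
  split; [|exact Hlin].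
  pose proof (game2_f_from_P a w) as H; rewrite Hf, Hlin in H.
  assert (Ha2 : a^2 <> 0) by (apply pow_nonzero; lra).
  apply (Rmult_eq_reg_l (a^2)); [lra | exact Ha2].
Qed.

Lemma game2_back_substitute a w : 0 < a -> r1_2 a <> 0 -> P2 a = 0 ->
  r1_2 a * w + r0_2 a = 0 -> f2 a w = 0 /\ g2 a w = 0.
Proof.
  intros Ha Hr1 HP Hlin.
  assert (Hf : f2 a w = 0).
  { pose proof (game2_f_from_P a w) as H; rewrite HP, Hlin in H.
    apply (Rmult_eq_reg_l (r1_2 a ^ 2)); [lra | apply pow_nonzero, Hr1]. }
  split; [exact Hf|].
  pose proof (game2_g_from_f a w) as H; rewrite Hf, Hlin in H.
  apply (Rmult_eq_reg_l (4 * a^2)); [lra | apply Rmult_integral_contrapositive;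
    split; [lra | apply pow_nonzero; lra]].
Qed.

Lemma game2_P_derivative a : derivable_pt_lim P2 a (dP2 a).
Proof. apply is_derive_Reals; unfold P2, dP2; auto_derive; [trivial | ring]. Qed.

Lemma game2_dP_nonzero a : 0 <= a <= 1 -> dP2 a <> 0.
Proof.
  intro Ha; enough (0 < - dP2 a) by lra.
  unfold dP2; interval_positive1 a (0, 1)%Q 8%nat.
Qed.

Lemma game2_P_sign_change : P2 (2306/10000) * P2 (2307/10000) <= 0.
Proof. unfold P2; lra. Qed.

Lemma game2_linear_sign_change a : 2306/10000 <= a <= 2307/10000 ->
  (r1_2 a * (425/1000) + r0_2 a) * (r1_2 a * (426/1000) + r0_2 a) < 0.
Proof.
  intro Ha; enough (0 < - ((r1_2 a * (425/1000) + r0_2 a) * (r1_2 a * (426/1000) + r0_2 a)))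
    by lra.
  unfold r1_2, r0_2; interval_positive1 a (2306 # 10000, 2307 # 10000)%Q 0%nat.
Qed.

Definition J11_2 (a w : R) : R :=
  1 - 2 * w - 4 * a + 8 * a * w - 4 * a * w^2 + 6 * a^2 - 12 * a^2 * w - 4 * a^3.
Definition J12_2 (a w : R) : R := - 2 * a + 4 * a^2 - 4 * a^2 * w - 4 * a^3.
Definition J21_2 (a w : R) : R :=
  4 * w - 4 * w^2 + 2 * w^3 - 12 * a * w + 8 * a * w^2 + 12 * a^2 * w.
Definition J22_2 (a w : R) : R :=
  - 1 + 4 * w - 6 * w^2 + 4 * w^3 + 4 * a - 8 * a * w + 6 * a * w^2 - 6 * a^2
  + 8 * a^2 * w + 4 * a^3.

Lemma game2_jacobian a w :
  is_jacobian Game2 (chart a w) (J11_2 a w) (J12_2 a w) (J21_2 a w) (J22_2 a w).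
Proof.
  unfold is_jacobian; repeat split; jacobian_entry IBR_game2_0 IBR_game2_1
    ltac:(unfold growth2_0, growth2_1, J11_2, J12_2, J21_2, J22_2).
Qed.

Lemma game2_trace_positive a w : 2306/10000 <= a <= 2307/10000 ->
  425/1000 <= w <= 426/1000 -> 0 < J11_2 a w + J22_2 a w.
Proof.
  intros Ha Hw; unfold J11_2, J22_2.
  interval_positive a w (2306 # 10000, 2307 # 10000)%Q (425 # 1000, 426 # 1000)%Q 0%nat.
Qed.

Lemma game2_det_positive a w : 2306/10000 <= a <= 2307/10000 ->
  425/1000 <= w <= 426/1000 -> 0 < J11_2 a w * J22_2 a w - J12_2 a w * J21_2 a w.
Proof.
  intros Ha Hw; unfold J11_2, J12_2, J21_2, J22_2.
  interval_positive a w (2306 # 10000, 2307 # 10000)%Q (425 # 1000, 426 # 1000)%Q 0%nat.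
Qed.

Lemma game2_unique_repelling : exists p, unique_repelling_interior_rest Game2 p.
Proof.
  apply (unique_repelling_of_certificate Game2 f2 g2 game2_rest_point_chart
           P2 dP2 r1_2 r0_2 game2_eliminate game2_back_substitute
           game2_P_derivative game2_dP_nonzero
           (2306/10000) (2307/10000) (425/1000) (426/1000) ltac:(lra)
           game2_P_sign_change game2_linear_sign_change
           J11_2 J12_2 J21_2 J22_2 game2_jacobian
           game2_trace_positive game2_det_positive).
Qed.

(** * Game 3 *)

Definition growth3_0 (x0 x1 x2 : R) : R :=
  x2^3 + x1 * x2^2 + x1^2 * x2 - x1^3 + x0 * x2^2 + 2 * x0 * x1 * x2 - x0 * x1^2
  + x0^2 * x2 - x0^2 * x1.
Definition growth3_1 (x0 x1 x2 : R) : R :=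
  - x2^3 - x1 * x2^2 - x1^2 * x2 - x0 * x2^2 + x0 * x1^2 - x0^2 * x2 + x0^2 * x1
  + x0^3.
Definition growth3_2 (x0 x1 x2 : R) : R :=
  x1 * x2^2 + x1^2 * x2 + x1^3 - x0 * x2^2 - x0 * x1^2 - x0^2 * x2 - x0^2 * x1
  - x0^3.

Lemma IBR_game3_0 x : IBR Game3 x 0%nat = x 0%nat * growth3_0 (x 0%nat) (x 1%nat) (x 2%nat).
Proof. unfold IBR, growth3_0; simpl sum_f_R0; unfold Game3; eval_cmpR; ring. Qed.
Lemma IBR_game3_1 x : IBR Game3 x 1%nat = x 1%nat * growth3_1 (x 0%nat) (x 1%nat) (x 2%nat).
Proof. unfold IBR, growth3_1; simpl sum_f_R0; unfold Game3; eval_cmpR; ring. Qed.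
Lemma IBR_game3_2 x : IBR Game3 x 2%nat = x 2%nat * growth3_2 (x 0%nat) (x 1%nat) (x 2%nat).
Proof. unfold IBR, growth3_2; simpl sum_f_R0; unfold Game3; eval_cmpR; ring. Qed.

Definition f3 (a w : R) : R := growth3_0 a w (1 - a - w) + 2 * growth3_1 a w (1 - a - w).
Definition g3 (a w : R) : R := growth3_0 a w (1 - a - w).

Lemma game3_rest_point_chart a w : 0 < a -> 0 < w -> 0 < 1 - a - w ->
  (rest_point Game3 (chart a w) <-> f3 a w = 0 /\ g3 a w = 0).
Proof.
  intros Ha Hw Hc.
  rewrite (rest_point_chart_iff Game3 growth3_0 growth3_1 growth3_2
             IBR_game3_0 IBR_game3_1 IBR_game3_2 a w Ha Hw Hc).
  unfold f3, g3; split; [intros (H0 & H1 & _); lra|]; intros [Hf H0].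
  assert (H1 : growth3_1 a w (1 - a - w) = 0) by lra.
  repeat split; try assumption.
  assert (Hbal : a * growth3_0 a w (1 - a - w) + w * growth3_1 a w (1 - a - w)
                 + (1 - a - w) * growth3_2 a w (1 - a - w) = 0)
    by (unfold growth3_0, growth3_1, growth3_2; ring).
  (* the field is tangent to the simplex, so the third growth rate vanishes too *)
  rewrite H0, H1 in Hbal.
  destruct (Rmult_integral (1 - a - w) (growth3_2 a w (1 - a - w))); lra.
Qed.

Definition P3 (a : R) : R :=
  -16 + a * (32 + a * (96 + a * (-176 + a * (256 + a * (256 + a * (-752
  + a * (1248 + a * (-864 + a * 432)))))))).
Definition dP3 (a : R) : R :=
  32 + a * (192 + a * (-528 + a * (1024 + a * (1280 + a * (-4512
  + a * (8736 + a * (-6912 + a * 3888))))))).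
Definition r1_3 (a : R) : R := -4 + a * (-8 + a * (-8 + a * -12)).
Definition r0_3 (a : R) : R := 4 + a * (a * (-8 + a * (12 + a * -24))).

Lemma game3_linear_in_ideal a w : r1_3 a * w + r0_3 a =
  (- 4 * w - 8 * a) * f3 a w + 4 * g3 a w.
Proof. unfold r1_3, r0_3, f3, g3, growth3_0, growth3_1; ring. Qed.

Lemma game3_f_from_P a w : r1_3 a ^ 2 * f3 a w = P3 a +
  (8 * w - 16 * a + 16 * a * w - 32 * a^2 + 16 * a^2 * w + 24 * a^3 * w - 48 * a^4)
  * (r1_3 a * w + r0_3 a).
Proof. unfold P3, r1_3, r0_3, f3, growth3_0, growth3_1; ring. Qed.

Lemma game3_g_from_f a w : 4 * g3 a w = (4 * w + 8 * a) * f3 a w + (r1_3 a * w + r0_3 a).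
Proof. unfold r1_3, r0_3, f3, g3, growth3_0, growth3_1; ring. Qed.

Lemma game3_eliminate a w : 0 < a -> f3 a w = 0 -> g3 a w = 0 ->
  P3 a = 0 /\ r1_3 a * w + r0_3 a = 0.
Proof.
  intros _ Hf Hg.
  assert (Hlin : r1_3 a * w + r0_3 a = 0)
    by (rewrite game3_linear_in_ideal, Hf, Hg; ring).
  split; [|exact Hlin].
  pose proof (game3_f_from_P a w) as H; rewrite Hf, Hlin in H; lra.
Qed.

Lemma game3_back_substitute a w : 0 < a -> r1_3 a <> 0 -> P3 a = 0 ->
  r1_3 a * w + r0_3 a = 0 -> f3 a w = 0 /\ g3 a w = 0.
Proof.
  intros _ Hr1 HP Hlin.
  assert (Hf : f3 a w = 0).
  { pose proof (game3_f_from_P a w) as H; rewrite HP, Hlin in H.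
    apply (Rmult_eq_reg_l (r1_3 a ^ 2)); [lra | apply pow_nonzero, Hr1]. }
  split; [exact Hf|].
  pose proof (game3_g_from_f a w) as H; rewrite Hf, Hlin in H; lra.
Qed.

Lemma game3_P_derivative a : derivable_pt_lim P3 a (dP3 a).
Proof. apply is_derive_Reals; unfold P3, dP3; auto_derive; [trivial | ring]. Qed.

Lemma game3_dP_nonzero a : 0 <= a <= 1 -> dP3 a <> 0.
Proof.
  intro Ha; enough (0 < dP3 a) by lra.
  unfold dP3; interval_positive1 a (0, 1)%Q 2%nat.
Qed.

Lemma game3_P_sign_change : P3 (3018/10000) * P3 (3019/10000) <= 0.
Proof. unfold P3; lra. Qed.

Lemma game3_linear_sign_change a : 3018/10000 <= a <= 3019/10000 ->
  (r1_3 a * (455/1000) + r0_3 a) * (r1_3 a * (456/1000) + r0_3 a) < 0.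
Proof.
  intro Ha; enough (0 < - ((r1_3 a * (455/1000) + r0_3 a) * (r1_3 a * (456/1000) + r0_3 a)))
    by lra.
  unfold r1_3, r0_3; interval_positive1 a (3018 # 10000, 3019 # 10000)%Q 0%nat.
Qed.

Definition J11_3 (a w : R) : R :=
  1 - 2 * w + 2 * w^2 - 2 * w^3 - 4 * a + 8 * a * w - 8 * a * w^2 + 6 * a^2
  - 12 * a^2 * w - 4 * a^3.
Definition J12_3 (a w : R) : R :=
  - 2 * a + 4 * a * w - 6 * a * w^2 + 4 * a^2 - 8 * a^2 * w - 4 * a^3.
Definition J21_3 (a w : R) : R :=
  2 * w - 2 * w^2 + 2 * w^3 - 4 * a * w + 4 * a * w^2 + 6 * a^2 * w.
Definition J22_3 (a w : R) : R :=
  - 1 + 4 * w - 6 * w^2 + 4 * w^3 + 2 * a - 4 * a * w + 6 * a * w^2 - 2 * a^2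
  + 4 * a^2 * w + 2 * a^3.

Lemma game3_jacobian a w :
  is_jacobian Game3 (chart a w) (J11_3 a w) (J12_3 a w) (J21_3 a w) (J22_3 a w).
Proof.
  unfold is_jacobian; repeat split; jacobian_entry IBR_game3_0 IBR_game3_1
    ltac:(unfold growth3_0, growth3_1, J11_3, J12_3, J21_3, J22_3).
Qed.

Lemma game3_trace_positive a w : 3018/10000 <= a <= 3019/10000 ->
  455/1000 <= w <= 456/1000 -> 0 < J11_3 a w + J22_3 a w.
Proof.
  intros Ha Hw; unfold J11_3, J22_3.
  interval_positive a w (3018 # 10000, 3019 # 10000)%Q (455 # 1000, 456 # 1000)%Q 0%nat.
Qed.

Lemma game3_det_positive a w : 3018/10000 <= a <= 3019/10000 ->
  455/1000 <= w <= 456/1000 -> 0 < J11_3 a w * J22_3 a w - J12_3 a w * J21_3 a w.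
Proof.
  intros Ha Hw; unfold J11_3, J12_3, J21_3, J22_3.
  interval_positive a w (3018 # 10000, 3019 # 10000)%Q (455 # 1000, 456 # 1000)%Q 0%nat.
Qed.

Lemma game3_unique_repelling : exists p, unique_repelling_interior_rest Game3 p.
Proof.
  apply (unique_repelling_of_certificate Game3 f3 g3 game3_rest_point_chart
           P3 dP3 r1_3 r0_3 game3_eliminate game3_back_substitute
           game3_P_derivative game3_dP_nonzero
           (3018/10000) (3019/10000) (455/1000) (456/1000) ltac:(lra)
           game3_P_sign_change game3_linear_sign_change
           J11_3 J12_3 J21_3 J22_3 game3_jacobian
           game3_trace_positive game3_det_positive).
Qed.

Theorem proposition5 :
  (exists p, unique_repelling_interior_rest Game1 p) /\
  (exists p, unique_repelling_interior_rest Game2 p) /\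
  (exists p, unique_repelling_interior_rest Game3 p) /\
  (* Game1: the interior rest point is (1/3,1/3,1/3) with eigenvalues (1 ± 2i√26)/27 *)
  (forall p, unique_repelling_interior_rest Game1 p ->
     p 0%nat = 1/3 /\ p 1%nat = 1/3 /\ p 2%nat = 1/3) /\
  (exists J11 J12 J21 J22,
     is_jacobian Game1 (fun _ => 1/3) J11 J12 J21 J22 /\
     forall l, is_eigenvalue2 J11 J12 J21 J22 l <->
       (l = (1/27, 2 * sqrt 26 / 27) \/ l = (1/27, - (2 * sqrt 26 / 27)))).
Proof.
  split; [exists barycentre; exact game1_unique_repelling|].
  split; [exact game2_unique_repelling|].
  split; [exact game3_unique_repelling|].
  split.
  - intros p (_ & _ & Hunique & _).
    pose proof (Hunique barycentre barycentre_interior barycentre_rest_point) as H.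
    split; [|split]; symmetry; apply H; lia.
  - exists (-7/27), (-14/27), (4/9), (1/3).
    split; [exact game1_jacobian | exact game1_eigenvalues].
Qed.
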